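(* Let $k$ and $n$ be positive integers. Any two $n$-vertex graphs whose components are all cycles with at least $k+1$ vertices have identical $k$-decks.
   Context: The $k$-deck $\mathcal{D}_k(G)$ of a graph $G$ is the multiset of isomorphism classes of the induced subgraphs of $G$ on $k$ vertices. *)

From mathcomp Require Import all_boot.
Set Implicit Arguments. Unset Strict Implicit. Unset Printing Implicit Defensive.

Definition simple_graph (T : finType) (e : rel T) : Prop :=
  symmetric e /\ irreflexive e.

Definition component (T : finType) (e : rel T) (x : T) : {set T} :=
  [set y | connect e x y].

Definition is_cycle_on (T : finType) (e : rel T) (C : {set T}) : Prop :=
  exists s : seq T,
    [/\ uniq s, 2 < size s, (forall y, (y \in C) = (y \in s)) &
        (forall y z, y \in s -> e y z = (z == next s y) || (z == prev s y))].

Definition cycles_at_least (T : finType) (e : rel T) (k : nat) : Prop :=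
  forall x : T, is_cycle_on e (component e x) /\ k < #|component e x|.

Definition induced_iso (T : finType) (e : rel T) (S : {set T}) (k : nat)
  (h : rel 'I_k) : bool :=
  [exists f : {ffun 'I_k -> T},
     [&& injectiveb f, f @: setT == S &
         [forall i, forall j, e (f i) (f j) == h i j]]].

(* Multiplicity in the k-deck of the isomorphism class of h. *)
Definition deck_count (T : finType) (e : rel T) (k : nat) (h : rel 'I_k) : nat :=
  #|[set S : {set T} | (#|S| == k) && induced_iso e S h]|.

Definition same_k_deck (T1 T2 : finType) (e1 : rel T1) (e2 : rel T2) (k : nat) : Prop :=
  forall h : rel 'I_k, @deck_count T1 e1 k h = @deck_count T2 e2 k h.

From mathcomp Require Import all_boot.
Set Implicit Arguments. Unset Strict Implicit. Unset Printing Implicit Defensive.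

(* The pattern of a map f : I -> T records, for every pair of indices, whether
   their images coincide and whether they are adjacent.  Counting maps
   'I_k -> T with the pattern of a k-vertex graph h counts the induced copies
   of h, each once per automorphism of h, so it suffices to show that the two
   graphs have the same pattern counts on index sets of size at most k.
   A pattern identifying two indices is counted on a smaller index set.  A
   pattern with no edges across a cut A is counted as the product of the counts
   of its restrictions to A and ~: A, minus the counts of the patterns adding
   edges across the cut, which have fewer non-edges.  By induction, all counts
   are determined by those of injective connected patterns.  When every cycle
   is longer than k, the image of such a map with j <= k indices is an arc
   u, sg u, ..., sg^(j-1) u of a cycle, so its count is n times the number of
   labelings of the pattern along a path, whatever the cycle lengths are. *)

Definition pattern (I : finType) := {ffun I * I -> bool * bool}.

Section Patterns.
Variables (T : finType) (e : rel T).

Definition pattern_of (I : finType) (f : {ffun I -> T}) : pattern I :=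
  [ffun xy => (f xy.1 == f xy.2, e (f xy.1) (f xy.2))].

Definition npattern (I : finType) (p : pattern I) : nat :=
  #|[set f : {ffun I -> T} | pattern_of f == p]|.

Lemma card_pattern_pred (I : finType) (P : pred (pattern I)) :
  #|[set f : {ffun I -> T} | P (pattern_of f)]| = \sum_(q | P q) npattern q.
Proof.
rewrite -sum1_card (eq_bigl (fun f => P (pattern_of f))); last by move=> f; rewrite inE.
rewrite (partition_big (@pattern_of I) P) //; apply: eq_bigr => q Pq.
rewrite /npattern -sum1_card; apply: eq_bigl => f; rewrite inE.
by case: (pattern_of f =P q) => [->|_]; rewrite ?Pq ?andbF.
Qed.

Lemma npattern_diag0 (I : finType) (p : pattern I) x :
  ~~ (p (x, x)).1 -> npattern p = 0.
Proof.
move=> px; apply/eqP; rewrite cards_eq0; apply/eqP/setP => f; rewrite !inE.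
by apply: contraNF px => /eqP <-; rewrite ffunE /= eqxx.
Qed.

Lemma npattern_void (I : finType) (p : pattern I) : #|I| = 0 -> npattern p = 1.
Proof.
move=> I0; have noI (x : I) : False by have := card0_eq I0 x; rewrite !inE.
rewrite /npattern; suff -> : [set f : {ffun I -> T} | pattern_of f == p] = setT.
  by rewrite cardsT card_ffun I0.
by apply/setP => f; rewrite !inE; apply/eqP/ffunP => -[x y]; case: (noI x).
Qed.

Section Merge.
Variables (I : finType) (i j : I).
Hypothesis neq_ij : i != j.

Definition merge_dom := {x : I | x != j}.

Definition merge_idx (x : I) : merge_dom := insubd (exist _ i neq_ij) x.

Lemma val_merge_idx x : val (merge_idx x) = if x == j then i else x.
Proof. by rewrite /merge_idx val_insubd; case: eqP. Qed.

Definition merge_pattern (q : pattern merge_dom) : pattern I :=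
  [ffun xy => q (merge_idx xy.1, merge_idx xy.2)].

Lemma npattern_merge (p : pattern I) : (p (i, j)).1 ->
  npattern p = #|[set g : {ffun merge_dom -> T} | merge_pattern (pattern_of g) == p]|.
Proof.
move=> pij; pose ext (g : {ffun merge_dom -> T}) := [ffun x => g (merge_idx x)].
have pattern_ext g : pattern_of (ext g) = merge_pattern (pattern_of g).
  by apply/ffunP => xy; rewrite !ffunE.
have ext_inj : injective ext.
  move=> g1 g2 /ffunP eq_g; apply/ffunP => y; have := eq_g (val y); rewrite !ffunE.
  suff -> : merge_idx (val y) = y by [].
  by apply: val_inj; rewrite val_merge_idx (negPf (valP y)).
rewrite /npattern -(card_imset _ ext_inj); apply: eq_card => f; rewrite inE.
apply/eqP/imsetP => [pf | [g]]; last by rewrite inE -pattern_ext => /eqP <- ->.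
have fij : f i = f j by move: pij; rewrite -pf ffunE => /eqP.
have extK : ext [ffun y => f (val y)] = f.
  by apply/ffunP => x; rewrite !ffunE val_merge_idx; case: eqP => // ->.
by exists [ffun y => f (val y)]; rewrite // inE -pattern_ext extK pf.
Qed.

End Merge.

Section Restriction.
Variable I : finType.

Definition restr_pattern (B : {set I}) (p : pattern I) : pattern {x | x \in B} :=
  [ffun xy => p (val xy.1, val xy.2)].

Lemma restr_pattern_eq (B : {set I}) (p q : pattern I) x y :
  restr_pattern B p = restr_pattern B q -> x \in B -> y \in B -> p (x, y) = q (x, y).
Proof.
move=> /ffunP/(_ (exist _ x _, exist _ y _)) + xB yB => /(_ xB yB).
by rewrite !ffunE.
Qed.

Lemma npattern_split (A : {set I}) (p : pattern I) :
  \sum_(q | (restr_pattern A q == restr_pattern A p) &&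
            (restr_pattern (~: A) q == restr_pattern (~: A) p)) npattern q =
  npattern (restr_pattern A p) * npattern (restr_pattern (~: A) p).
Proof.
rewrite -card_pattern_pred.
pose restr (B : {set I}) (f : {ffun I -> T}) : {ffun {x | x \in B} -> T} :=
  [ffun y => f (val y)].
have pattern_restr (B : {set I}) f :
    pattern_of (restr B f) = restr_pattern B (pattern_of f).
  by apply/ffunP => xy; rewrite !ffunE.
pose F f := (restr A f, restr (~: A) f).
have F_inj : injective F.
  move=> f1 f2 [/ffunP eqA /ffunP eqB]; apply/ffunP => x.
  case: (boolP (x \in A)) => [xA | xnA].
    by have := eqA (exist _ x xA); rewrite !ffunE.
  have xCA : x \in ~: A by rewrite inE.
  by have := eqB (exist _ x xCA); rewrite !ffunE.
have F_bij : bijective F.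
  apply: inj_card_bij F_inj _.
  by rewrite card_prod !card_ffun !card_sig -expnD cardsC.
rewrite /npattern -cardsX -(on_card_preimset (onW_bij _ F_bij)).
by apply: eq_card => f; rewrite !inE -!pattern_restr.
Qed.

End Restriction.
End Patterns.

Section PatternShape.
Variable I : finType.
Implicit Types p q : pattern I.

Definition injective_pattern p : bool :=
  [forall x, forall y, (p (x, y)).1 == (x == y)].

Definition connected_pattern p : bool :=
  [forall A : {set I}, (A != set0) && (A != setT) ==>
     [exists x in A, exists y in ~: A, (p (x, y)).2 || (p (y, x)).2]].

Definition nonedges p : nat := #|[set xy | ~~ (p xy).2]|.

Lemma injective_patternP p :
  reflect (forall x y, (p (x, y)).1 = (x == y)) (injective_pattern p).
Proof.
apply: (iffP forallP) => [p_inj x y | p_inj x]; last by apply/forallP => y; rewrite p_inj.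
by have /forallP/(_ y)/eqP := p_inj x.
Qed.

Lemma connected_pattern_cut p (A : {set I}) : connected_pattern p ->
  A != set0 -> A != setT ->
  exists x y, [/\ x \in A, y \notin A & (p (x, y)).2 || (p (y, x)).2].
Proof.
move=> /forallP/(_ A); rewrite /= => + A0 AT; rewrite A0 AT /=.
case/exists_inP => x xA /exists_inP[y]; rewrite inE => yA pxy.
by exists x, y.
Qed.

Lemma disconnected_pattern_cut p : ~~ connected_pattern p ->
  exists A : {set I}, [/\ A != set0, A != setT &
    forall x y, (x \in A) != (y \in A) -> ~~ (p (x, y)).2].
Proof.
case/forallPn => A; rewrite negb_imply => /andP[/andP[A0 AT] /exists_inPn cutA].
exists A; split=> // x y.
have cut u v : u \in A -> v \notin A -> ~~ (p (u, v)).2 && ~~ (p (v, u)).2.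
  by move=> uA vA; have /exists_inPn := cutA u uA; move/(_ v); rewrite inE negb_or; apply.
by case: (boolP (x \in A)) => xA; case: (boolP (y \in A)) => yA //= _;
  [case/andP: (cut x y xA yA) | case/andP: (cut y x yA xA)].
Qed.

Lemma nonedges_cut_lt (A : {set I}) p q :
  injective_pattern p -> injective_pattern q ->
  (forall x y, (x \in A) != (y \in A) -> ~~ (p (x, y)).2) ->
  restr_pattern A q = restr_pattern A p ->
  restr_pattern (~: A) q = restr_pattern (~: A) p ->
  q != p -> nonedges q < nonedges p.
Proof.
move=> /injective_patternP p_inj /injective_patternP q_inj cutA qpA qpCA neq_qp.
have same_block x y : (x \in A) = (y \in A) -> q (x, y) = p (x, y).
  case: (boolP (x \in A)) => xA eq_xy.
    by apply: restr_pattern_eq qpA _ _; rewrite -?eq_xy.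
  by apply: restr_pattern_eq qpCA _ _; rewrite !inE -?eq_xy.
have [[x y] neq_xy] : exists xy, q xy != p xy.
  apply/existsP; apply: contraNT neq_qp => /existsPn eq_qp.
  by apply/eqP/ffunP => xy; apply/eqP/negPn.
have cut_xy : (x \in A) != (y \in A) by apply: contra neq_xy => /eqP/same_block ->.
have q_xy : (q (x, y)).2.
  apply: contraNT neq_xy => nq_xy.
  by rewrite [q _]surjective_pairing [p _]surjective_pairing p_inj q_inj
    (negPf nq_xy) (negPf (cutA _ _ cut_xy)).
apply: proper_card; rewrite properE; apply/andP; split.
  apply/subsetP => -[u v]; rewrite !inE.
  have [/same_block -> //|cut_uv _] := eqVneq (u \in A) (v \in A).
  exact: cutA.
by apply/subsetPn; exists (x, y); rewrite !inE ?q_xy ?cutA.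
Qed.

End PatternShape.

Section Transfer.
Variables (T1 T2 : finType) (e1 : rel T1) (e2 : rel T2) (k : nat).
Hypothesis npattern_connected_eq : forall (I : finType) (p : pattern I),
  0 < #|I| <= k -> injective_pattern p -> connected_pattern p ->
  npattern e1 p = npattern e2 p.

Section Step.
Variable I : finType.
Hypothesis IH : forall (J : finType) (q : pattern J),
  #|J| < #|I| -> npattern e1 q = npattern e2 q.

Lemma npattern_eq_noninjective (p : pattern I) :
  ~~ injective_pattern p -> npattern e1 p = npattern e2 p.
Proof.
case/forallPn => x /forallPn[y]; have [<-|neq_xy] := eqVneq x y.
  by rewrite eqb_id => px; rewrite !(npattern_diag0 _ px).
rewrite eqbF_neg negbK => pxy.
rewrite !(npattern_merge _ neq_xy pxy).
rewrite !(card_pattern_pred _ (fun q => merge_pattern neq_xy q == p)).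
apply: eq_bigr => q _; apply: IH.
rewrite card_sig (eq_card (B := predC1 y)) // cardC1 ltn_predL.
by apply/card_gt0P; exists y.
Qed.

Lemma npattern_eq_disconnected (p : pattern I) :
  injective_pattern p -> ~~ connected_pattern p ->
  (forall q : pattern I, nonedges q < nonedges p -> npattern e1 q = npattern e2 q) ->
  npattern e1 p = npattern e2 p.
Proof.
move=> p_inj /disconnected_pattern_cut[A [A0 AT cutA]] IHq.
have Rp : (restr_pattern A p == restr_pattern A p) &&
          (restr_pattern (~: A) p == restr_pattern (~: A) p) by rewrite !eqxx.
have ltA : #|{: {x | x \in A}}| < #|I|.
  by rewrite card_sig -cardsT; apply: proper_card; rewrite properT.
have ltCA : #|{: {x | x \in ~: A}}| < #|I|.
  by rewrite card_sig -(cardsC A) -{1}[#|~: A|]add0n ltn_add2r card_gt0.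
have := npattern_split e1 A p; rewrite (IH _ ltA) (IH _ ltCA) -(npattern_split e2).
rewrite !(bigD1 p Rp) /= (eq_bigr (@npattern _ e2 I)) => [/addIn //|].
move=> q /andP[/andP[/eqP qpA /eqP qpCA] neq_qp].
have [q_inj|] := boolP (injective_pattern q); last exact: npattern_eq_noninjective.
exact: IHq (nonedges_cut_lt p_inj q_inj cutA qpA qpCA neq_qp).
Qed.

End Step.

Lemma npattern_eq_small (I : finType) (p : pattern I) :
  #|I| <= k -> npattern e1 p = npattern e2 p.
Proof.
have [m] := ubnP #|I|; elim: m I p => // m IHm I p ltIm leIk.
have IH (J : finType) (q : pattern J) : #|J| < #|I| -> npattern e1 q = npattern e2 q.
  by move=> ltJI; apply: IHm; [apply: leq_trans ltJI _ | apply: ltnW (leq_trans ltJI _)].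
have [I0|I_gt0] := posnP #|I|; first by rewrite !npattern_void.
have [n] := ubnP (nonedges p); elim: n p => // n IHn p ltpn.
have [p_inj|] := boolP (injective_pattern p); last exact: npattern_eq_noninjective.
have [p_conn|p_disc] := boolP (connected_pattern p).
  by apply: npattern_connected_eq; rewrite ?I_gt0.
apply: npattern_eq_disconnected => // q ltqp.
exact: IHn (leq_trans ltqp _).
Qed.

End Transfer.

Lemma connected_pattern_closed (T : finType) (e : rel T) (I : finType)
    (f : {ffun I -> T}) (B : {set T}) :
  connected_pattern (pattern_of e f) -> (exists x, f x \in B) ->
  (forall x y, f x \in B -> e (f x) (f y) || e (f y) (f x) -> f y \in B) ->
  forall y, f y \in B.
Proof.
move=> f_conn [x0 x0B] closedB y; apply: contraT => yB.
pose A := [set x | f x \in B].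
have A0 : A != set0 by apply/set0Pn; exists x0; rewrite inE.
have AT : A != setT by apply/eqP => /setP/(_ y); rewrite !inE (negPf yB).
have [u [v [uA vA]]] := connected_pattern_cut f_conn A0 AT.
by rewrite !inE in uA vA; rewrite !ffunE => /(closedB _ _ uA); rewrite (negPf vA).
Qed.

Definition consecutive (a b : nat) : bool := (b == a.+1) || (a == b.+1).

Definition path_labelings (I : finType) (p : pattern I) : {set {ffun I -> 'I_#|I|}} :=
  [set d : {ffun I -> 'I_#|I|} | injectiveb d &&
     [forall x, forall y, (p (x, y)).2 == consecutive (d x) (d y)]].

Section SuccessorGraph.
Variables (T : finType) (sg : T -> T) (k : nat) (e : rel T).
Hypotheses (sg_inj : injective sg) (order_gt : forall x, k < order sg x).
Hypothesis eE : forall x y, e x y = (y == sg x) || (x == sg y).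

Lemma iter_order_inj x a b : a < order sg x -> b < order sg x ->
  iter a sg x = iter b sg x -> a = b.
Proof. by move=> lt_a lt_b eq_ab; rewrite -(findex_iter lt_a) eq_ab findex_iter. Qed.

Lemma succ_adj_sym : symmetric e.
Proof. by move=> x y; rewrite !eE orbC. Qed.

Lemma succ_adj_iter u a b : a < k -> b < k ->
  e (iter a sg u) (iter b sg u) = consecutive a b.
Proof.
move=> lt_ak lt_bk; have lt_order c : c <= k -> c < order sg u.
  by move=> le_ck; apply: leq_ltn_trans le_ck (order_gt u).
rewrite eE /consecutive -!iterS.
by congr (_ || _); apply/eqP/eqP => [/iter_order_inj|->] //;
  apply; apply: lt_order => //; apply: ltnW.
Qed.

(* Otherwise [S] would be stable under [sg], hence contain a whole orbit,
   which has more than k points. *)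
Lemma exists_arc_start (S : {set T}) : S != set0 -> #|S| <= k ->
  exists2 u, u \in S & forall y, y \in S -> sg y != u.
Proof.
move=> /set0Pn[x0 x0S] leSk.
have [/exists_inP[u uS /forall_inP u_start]|/exists_inPn no_start] :=
  boolP [exists u in S, [forall y in S, sg y != u]]; first by exists u.
have sgS : S \subset sg @: S.
  apply/subsetP => v vS; have /forall_inPn[y yS] := no_start v vS.
  by rewrite negbK => /eqP <-; apply: imset_f.
have sgS_eq : sg @: S = S.
  by apply/eqP; rewrite eq_sym eqEcard sgS (card_imset _ sg_inj) leqnn.
have iterS t : iter t sg x0 \in S.
  by elim: t => //= t IHt; rewrite -sgS_eq imset_f.
suff : order sg x0 <= #|S| by rewrite leqNgt (leq_ltn_trans leSk (order_gt x0)).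
rewrite -size_orbit -(card_uniqP (orbit_uniq _ _)).
by apply: subset_leq_card; apply/subsetP => y /trajectP[t _ ->].
Qed.

Section Connected.
Variables (I : finType) (p : pattern I).
Hypotheses (I_gt0 : 0 < #|I|) (leIk : #|I| <= k).
Hypotheses (p_inj : injective_pattern p) (p_conn : connected_pattern p).

Let lt_order x (c : 'I_#|I|) : c < order sg x.
Proof. exact: leq_trans (ltn_ord c) (leq_trans leIk (ltnW (order_gt x))). Qed.

Definition arc_map (u : T) (d : {ffun I -> 'I_#|I|}) : {ffun I -> T} :=
  [ffun x => iter (d x) sg u].

Lemma pattern_arc_map u d : d \in path_labelings p -> pattern_of e (arc_map u d) = p.
Proof.
rewrite inE => /andP[/injectiveP d_inj /forallP d_path].
apply/ffunP => -[x y]; rewrite !ffunE /= succ_adj_iter ?(leq_trans (ltn_ord _) leIk) //.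
rewrite [RHS]surjective_pairing (injective_patternP _ p_inj) -(eqP (forallP (d_path x) y)).
congr (_, _); apply/eqP/eqP => [/iter_order_inj eq_d | -> //].
by apply/d_inj/val_inj/eq_d; apply: lt_order.
Qed.

Lemma path_labeling_onto d (t : 'I_#|I|) : d \in path_labelings p -> exists x, d x = t.
Proof.
rewrite inE => /andP[/injectiveP d_inj _].
have /codomP[x ->] := inj_card_onto d_inj (eq_leq (card_ord _)) t.
by exists x.
Qed.

Lemma arc_map_inj : {in setX setT (path_labelings p) &,
  injective (fun ud => arc_map ud.1 ud.2)}.
Proof.
move=> [u d] [u' d'] /setXP[_ dP] /setXP[_ dP'] /ffunP /= eq_enc.
have eq_iter x : iter (d x) sg u = iter (d' x) sg u' by have := eq_enc x; rewrite !ffunE.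
have [x0 dx0] := path_labeling_onto (Ordinal I_gt0) dP.
have eq_u : u = u'.
  have u_arc : u = iter (d' x0) sg u' by rewrite -eq_iter dx0.
  case Ed: (nat_of_ord (d' x0)) u_arc => [|s] u_arc; first exact: u_arc.
  have lt_s : s < #|I| by have := ltn_ord (d' x0); rewrite Ed => /ltnW.
  have [x1 dx1] := path_labeling_onto (Ordinal lt_s) dP'.
  have : iter (d x1).+1 sg u = iter 0 sg u by rewrite iterS eq_iter dx1 -iterS -u_arc.
  have lt_d1 : (d x1).+1 < order sg u.
    by apply: leq_ltn_trans (order_gt u); apply: leq_trans (ltn_ord _) leIk.
  by move/(iter_order_inj lt_d1 (order_gt0 _ _)).
rewrite -eq_u in eq_iter *; congr (_, _); apply/ffunP => x.
by apply/val_inj/(iter_order_inj (lt_order _ _) (lt_order _ _))/eq_iter.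
Qed.

Section Image.
Variable f : {ffun I -> T}.
Hypothesis pf : pattern_of e f = p.

Let f_inj : injective f.
Proof.
move=> x y /eqP; have := congr1 (fun q : pattern I => (q (x, y)).1) pf.
by rewrite ffunE /= (injective_patternP _ p_inj) => -> /eqP.
Qed.

(* Otherwise the first points of the arc, starting at a point with no
   predecessor in the image, would be closed under adjacency within the
   connected image, hence would contain all of its #|I| points. *)
Lemma arc_in_image u t : u \in f @: setT -> (forall y, sg (f y) != u) ->
  t < #|I| -> iter t sg u \in f @: setT.
Proof.
case: t => [//|t] uS u_start lt_t; apply: contraT => notS.
pose B := [set iter (nat_of_ord r) sg u | r : 'I_t.+1].
have all_B : forall y, f y \in B.
  apply: (@connected_pattern_closed _ e); first by rewrite pf.
    by case/imsetP: uS => x _ ux; exists x; rewrite -ux; apply/imsetP; exists ord0.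
  move=> x y /imsetP[r _ fx]; rewrite [e (f y) _]succ_adj_sym orbb eE fx.
  case/orP => [/eqP fy | /eqP].
    have [lt_rt | le_tr] := ltnP r t.
      by rewrite fy; apply/imsetP; exists (Ordinal (lt_rt : r.+1 < t.+1)).
    have eq_rt : nat_of_ord r = t by apply/eqP; rewrite eqn_leq le_tr -ltnS ltn_ord.
    by case/negP: notS; rewrite -eq_rt iterS -fy imset_f.
  case: r fx => -[_ _ /= /esym/eqP | r lt_r _ /= /sg_inj <-].
    by rewrite (negPf (u_start y)).
  by apply/imsetP; exists (Ordinal (ltnW lt_r)).
have : f @: setT \subset B by apply/subsetP => _ /imsetP[y _ ->].
move/subset_leq_card; rewrite card_imset // cardsT => le_IB.
have := leq_trans le_IB (leq_trans (leq_imset_card _ _) (eq_leq (card_ord _))).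
by rewrite leqNgt lt_t.
Qed.

Lemma arc_map_onto : exists u d, d \in path_labelings p /\ f = arc_map u d.
Proof.
have S0 : f @: setT != set0.
  by case/card_gt0P: I_gt0 => x _; apply/set0Pn; exists (f x); apply: imset_f.
have leSk : #|f @: setT| <= k by rewrite card_imset // cardsT.
have [u uS u_start] := exists_arc_start S0 leSk.
have {}u_start y : sg (f y) != u by apply: u_start; apply: imset_f.
have arc_eq : [set iter (nat_of_ord r) sg u | r : 'I_#|I|] = f @: setT.
  apply/eqP; rewrite eqEcard card_imset ?cardsT // card_imset ?card_ord //.
    by apply/andP; split=> //; apply/subsetP => _ /imsetP[r _ ->]; apply: arc_in_image.
  by move=> r r' /(iter_order_inj (lt_order _ _) (lt_order _ _)) /val_inj.
have f_arc x : exists r : 'I_#|I|, iter r sg u == f x.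
  by have /imsetP[r _ ->] : f x \in [set iter (nat_of_ord r) sg u | r : 'I_#|I|];
    [rewrite arc_eq imset_f | exists r].
pose d := [ffun x => xchoose (f_arc x)].
have dE x : iter (d x) sg u = f x by rewrite /d ffunE; apply/eqP/(xchooseP (f_arc x)).
exists u, d; split; last by apply/ffunP => x; rewrite [RHS]ffunE dE.
rewrite inE; apply/andP; split.
  by apply/injectiveP => x y dxy; apply: f_inj; rewrite -!dE dxy.
apply/forallP => x; apply/forallP => y.
by rewrite -(succ_adj_iter u) ?(leq_trans (ltn_ord _) leIk) // !dE -pf ffunE.
Qed.

End Image.

Lemma npattern_connected : npattern e p = #|T| * #|path_labelings p|.
Proof.
rewrite /npattern -cardsT -cardsX -(card_in_imset arc_map_inj).
apply: eq_card => f; rewrite inE; apply/eqP/imsetP => [pf | [[u d] /setXP[_ dP] ->]].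
  by have [u [d [dP ->]]] := arc_map_onto pf; exists (u, d); rewrite // inE in_setT dP.
exact: pattern_arc_map.
Qed.

End Connected.
End SuccessorGraph.

Section Embeddings.
Variables (T : finType) (e : rel T) (I : finType) (h : rel I).

Definition iso_pattern : pattern I := [ffun xy => (xy.1 == xy.2, h xy.1 xy.2)].

Definition embeddings : {set {ffun I -> T}} :=
  [set f : {ffun I -> T} | injectiveb f && [forall i, forall j, e (f i) (f j) == h i j]].

Lemma npattern_iso : npattern e iso_pattern = #|embeddings|.
Proof.
rewrite /npattern; apply: eq_card => f; rewrite !inE.
apply/eqP/andP => [pf | [/injectiveP f_inj /forallP fe]].
  split; first apply/injectiveP => i j fij.
    have := congr1 (fun q : pattern I => (q (i, j)).1) pf.
    by rewrite !ffunE /= fij eqxx => /esym/eqP.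
  apply/forallP => i; apply/forallP => j.
  by have := congr1 (fun q : pattern I => (q (i, j)).2) pf; rewrite !ffunE /= => ->.
apply/ffunP => -[i j]; rewrite !ffunE /=; congr pair; last exact/eqP/(forallP (fe i)).
by apply/eqP/eqP => [/f_inj | ->].
Qed.

End Embeddings.

Lemma id_embedding (I : finType) (h : rel I) : [ffun i => i] \in embeddings h h.
Proof.
rewrite inE; apply/andP; split; first by apply/injectiveP => i j; rewrite !ffunE.
by apply/forallP => i; apply/forallP => j; rewrite !ffunE.
Qed.

Section Deck.
Variables (T : finType) (e : rel T) (k : nat) (h : rel 'I_k).

(* Embeddings with a given image [S] are the compositions of one of them
   with the automorphisms of [h]. *)
Lemma card_embeddings_onto (S : {set T}) : induced_iso e S h ->
  #|[set f in embeddings e h | f @: setT == S]| = #|embeddings h h|.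
Proof.
case/existsP => f0 /and3P[/injectiveP f0_inj /eqP f0S /forallP f0e].
have f0E i j : e (f0 i) (f0 j) = h i j by apply/eqP/(forallP (f0e i)).
pose comp (a : {ffun 'I_k -> 'I_k}) := [ffun i => f0 (a i)].
have comp_inj : injective comp.
  move=> a b /ffunP eq_ab; apply/ffunP => i; apply: f0_inj.
  by have := eq_ab i; rewrite !ffunE.
rewrite -(card_imset _ comp_inj); apply: eq_card => f; rewrite !inE.
apply/andP/imsetP => [[/andP[/injectiveP f_inj /forallP fe] /eqP fS] | [a]].
  have f_f0 i : exists j, f0 j == f i.
    have : f i \in f0 @: setT by rewrite f0S -fS imset_f.
    by case/imsetP => j _ ->; exists j.
  pose a := [ffun i => xchoose (f_f0 i)].
  have aE i : f0 (a i) = f i by rewrite /a ffunE; apply/eqP/(xchooseP (f_f0 i)).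
  exists a; last by apply/ffunP => i; rewrite [RHS]ffunE aE.
  rewrite inE; apply/andP; split.
    by apply/injectiveP => i j aij; apply: f_inj; rewrite -!aE aij.
  by apply/forallP => i; apply/forallP => j; rewrite -f0E !aE; apply: (forallP (fe i)).
rewrite inE => /andP[/injectiveP a_inj /forallP ae] ->; split.
  apply/andP; split; first by apply/injectiveP => i j; rewrite !ffunE => /f0_inj /a_inj.
  by apply/forallP => i; apply/forallP => j; rewrite !ffunE f0E; apply: (forallP (ae i)).
have a_onto : a @: setT = setT.
  by apply/eqP; rewrite eqEcard subsetT (card_imset _ a_inj) leqnn.
rewrite -f0S; apply/eqP/setP => z; apply/imsetP/imsetP => [[i _ ->]|[i _ ->]].
  by exists (a i); rewrite ?ffunE.
have : i \in a @: setT by rewrite a_onto.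
by case/imsetP => j _ ->; exists j; rewrite ?ffunE.
Qed.

Lemma npattern_deck :
  npattern e (iso_pattern h) = deck_count e h * #|embeddings h h|.
Proof.
rewrite npattern_iso -sum1_card.
rewrite (partition_big (fun f : {ffun 'I_k -> T} => f @: setT)
   (fun S => (#|S| == k) && induced_iso e S h)) /=; last first.
  move=> f; rewrite inE => /andP[f_inj fe]; apply/andP; split.
    by rewrite card_imset ?cardsT ?card_ord //; apply/injectiveP.
  by apply/existsP; exists f; rewrite f_inj eqxx fe.
rewrite /deck_count -sum_nat_const; apply: eq_big => [S | S /andP[_ S_iso]].
  by rewrite inE.
by rewrite -(card_embeddings_onto S_iso) sum1_card; apply: eq_card => f; rewrite [RHS]inE.
Qed.

End Deck.

Section CycleComponents.
Variables (T : finType) (e : rel T) (k : nat).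
Hypotheses (e_sym : symmetric e) (e_cycles : cycles_at_least e k).

Let cycle_seq_of (C : {set T}) (s : seq T) : bool :=
  [&& uniq s, C == [set y in s] &
      all (fun y => [forall z, e y z == (z == next s y) || (z == prev s y)]) s].

Let exists_cycle_seq x : exists s, cycle_seq_of (component e x) s.
Proof.
have [[s [s_uniq _ memC sE]] _] := e_cycles x; exists s.
rewrite /cycle_seq_of s_uniq /=; apply/andP; split.
  by apply/eqP/setP => y; rewrite inE memC.
by apply/allP => y ys; apply/forallP => z; rewrite sE.
Qed.

Let cyc x := xchoose (exists_cycle_seq x).

Let cyc_of x : cycle_seq_of (component e x) (cyc x) := xchooseP (exists_cycle_seq x).

Let uniq_cyc x : uniq (cyc x). Proof. by case/and3P: (cyc_of x). Qed.

Let mem_cyc x y : (y \in cyc x) = connect e x y.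
Proof. by case/and3P: (cyc_of x) => _ /eqP/setP/(_ y); rewrite !inE => <-. Qed.

Let cyc_eq x y : y \in cyc x -> cyc y = cyc x.
Proof.
rewrite mem_cyc => cxy; apply: eq_xchoose => s; congr cycle_seq_of.
by apply/setP => z; rewrite !inE (same_connect (sym_connect_sym e_sym) cxy).
Qed.

Let succ x := next (cyc x) x.

Let succ_next x y : y \in cyc x -> succ y = next (cyc x) y.
Proof. by move=> /cyc_eq cyc_y; rewrite /succ cyc_y. Qed.

Let cyc_succ x : succ x \in cyc x.
Proof. by rewrite mem_next mem_cyc connect0. Qed.

Let succ_inj : injective succ.
Proof.
move=> x y succ_xy; have y_x : y \in cyc x.
  have -> : cyc x = cyc y by rewrite -(cyc_eq (cyc_succ x)) succ_xy (cyc_eq (cyc_succ y)).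
  by rewrite mem_cyc connect0.
by move: succ_xy; rewrite (succ_next y_x) => /(can_inj (prev_next (uniq_cyc x))).
Qed.

Let order_succ x : order succ x = #|component e x|.
Proof.
have x_x : x \in cyc x by rewrite mem_cyc connect0.
have succ_cycle : fcycle succ (cyc x).
  rewrite (@eq_in_cycle _ (mem (cyc x)) _ (frel (next (cyc x)))) ?cycle_next //.
  by move=> y z y_x _ /=; rewrite (succ_next y_x).
rewrite (order_cycle succ_cycle (uniq_cyc x) x_x) -(card_uniqP (uniq_cyc x)).
by case/and3P: (cyc_of x) => _ /eqP -> _; rewrite cardsE.
Qed.

Let e_succ x y : e x y = (y == succ x) || (x == succ y).
Proof.
have x_x : x \in cyc x by rewrite mem_cyc connect0.
case/and3P: (cyc_of x) => _ _ /allP/(_ x x_x)/forallP/(_ y)/eqP ->.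
congr (_ || _); apply/eqP/eqP => [-> | x_succ].
  have prev_x : prev (cyc x) x \in cyc x by rewrite mem_prev.
  by rewrite (succ_next prev_x) next_prev.
have y_x : y \in cyc x by rewrite x_succ (cyc_eq (cyc_succ y)) mem_cyc connect0.
by rewrite {2}x_succ (succ_next y_x) (prev_next (uniq_cyc x)).
Qed.

Lemma cycles_successor : exists sg : T -> T,
  [/\ injective sg, forall x, k < order sg x &
      forall x y, e x y = (y == sg x) || (x == sg y)].
Proof.
by exists succ; split=> // x; rewrite order_succ; case: (e_cycles x).
Qed.

End CycleComponents.

Theorem corollary3p4 (k n : nat) (hk : 0 < k) (hn : 0 < n)
  (e1 e2 : rel 'I_n) :
  simple_graph e1 -> simple_graph e2 ->
  cycles_at_least e1 k -> cycles_at_least e2 k ->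
  same_k_deck e1 e2 k.
Proof.
move=> [e1_sym _] [e2_sym _] e1_cycles e2_cycles h.
have [sg1 [sg1_inj order1 e1E]] := cycles_successor e1_sym e1_cycles.
have [sg2 [sg2_inj order2 e2E]] := cycles_successor e2_sym e2_cycles.
have connected_eq (I : finType) (p : pattern I) : 0 < #|I| <= k ->
    injective_pattern p -> connected_pattern p -> npattern e1 p = npattern e2 p.
  move=> /andP[I_gt0 leIk] p_inj p_conn.
  rewrite (npattern_connected sg1_inj order1 e1E I_gt0 leIk p_inj p_conn).
  by rewrite (npattern_connected sg2_inj order2 e2E I_gt0 leIk p_inj p_conn).
have auts_gt0 : 0 < #|embeddings h h|.
  by apply/card_gt0P; exists [ffun i => i]; apply: id_embedding.
have := npattern_eq_small connected_eq (iso_pattern h) (eq_leq (card_ord k)).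
by rewrite !npattern_deck => /eqP; rewrite eqn_pmul2r // => /eqP.
Qed.
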